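(* Let $Q$ be a $\Sigma$-uniformized query with hypergraph $\mathcal{H}=(V,E)$, input size $n$, $p$ machines, let $\Delta>0$, and let $\psi$ be the vector returned by Construct$(Q,\Delta)$. Then for every $R\in Q$ with $\mathrm{vars}(R)\setminus H[\mathbf{V}(\psi)/\Delta]\neq\emptyset$, there exists a relation $R'\in Q$ such that (i) $\mathrm{vars}(R)\setminus H[\mathbf{V}(\psi)/\Delta]\subseteq\mathrm{vars}(R')$ and (ii) $\sum_{x\in\mathrm{vars}(R')}\mathbf{V}_x(\psi)\ge 1$.
   Context: A natural join query $Q$ is a set of relations (distinct schemas) with hypergraph $\mathcal{H}=(V,E)$, $V=\bigcup_R\mathrm{vars}(R)$, $E=\{\mathrm{vars}(R)\}$. $\mathcal{H}[S]$ has vertex set $S$ and edges $\{S\cap e: e\in E, S\cap e\ne\emptyset\}$; $\mathsf{red}$ removes every edge strictly contained in another; $\tau^*$ is the minimum fractional vertex cover value. $\deg_R(Y\mid X)=\max_{\mathbf{x}}|\pi_Y\sigma_{X=\mathbf{x}}R|$. A constraint set for $R$ is $\sigma_R:\mathcal{P}(\mathrm{vars}(R))\to\mathbb{R}_{\ge0}$; $R$ satisfies it if $\deg_R(Y\mid X)\le2\sigma_R(X)/\sigma_R(Y)$ for all $X\subseteq Y\subseteq\mathrm{vars}(R)$; $Q$ is $\Sigma$-uniformized ($\Sigma=\{\sigma_R\}_{R\in Q}$) if each $R$ satisfies $\sigma_R$. A vertex weight mapping is $\mathbf{v}:V\to\mathbb{R}_{\ge0}$. For $R\in Q$ and $U\subseteq\mathrm{vars}(R)$: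 $U$ is heavy in $R$ if $\sigma_R(U)\ge n/p^{\sum_{i\in U}v_i}$, consistent if $\sigma_R(U)\le n/p^{\sum_{i\in U}v_i}$. $\mathbf{v}$ is consistent with $Q$ if every $U\subseteq\mathrm{vars}(R)$ is consistent in $R$ for every $R\in Q$. $H[\mathbf{v}]$ is the union of all sets $U$ heavy in some $R\in Q$. For each $U\subseteq V$ fix a minimum fractional vertex cover $\mathbf{v}^*_U$ of $\mathsf{red}(\mathcal{H}[U])$ (zero outside $U$). For $\psi=(\psi_U)_{U\in\mathcal{P}(V)}$, $\mathbf{V}(\psi)=\sum_U\psi_U\mathbf{v}^*_U$ and $|\psi|_1=\sum_U\psi_U$. Construct$(Q,\Delta)$: set $\psi\gets\mathbf{0}$; while $|\psi|_1<1$ and $H[\mathbf{V}(\psi)/\Delta]\ne V$: let $L=V\setminus H[\mathbf{V}(\psi)/\Delta]$ and set $\psi_L$ to the largest $\delta\in(0,1-|\psi|_1]$ such that $Q$ is consistent with $(\mathbf{V}(\psi)+\delta\mathbf{v}^*_L)/\Delta$; return $\psi$. *)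

From HB Require Import structures.
From mathcomp Require Import all_boot all_order all_algebra.
From mathcomp Require Import reals exp.
Set Implicit Arguments. Unset Strict Implicit. Unset Printing Implicit Defensive.
Import Order.TTheory GRing.Theory Num.Theory.
Local Open Scope ring_scope.

(* Hypergraph part.  Vertices (attributes) form a finite type V; the query  *)
(* is given by its set of schemas E : {set {set V}} (schemas are distinct,  *)
(* so a relation is identified with its schema).                            *)

Definition induced_edges (V : finType) (E : {set {set V}}) (S : {set V})
  : {set {set V}} :=
  [set S :&: e | e in [set e in E | S :&: e != set0]].

Definition red (V : finType) (F : {set {set V}}) : {set {set V}} :=
  [set f in F | ~~ [exists g in F, f \proper g]].

Definition is_fvc (R : realType) (V : finType) (F : {set {set V}}) (w : V -> R)
  : Prop :=
  (forall x, 0 <= w x) /\ (forall f, f \in F -> 1 <= \sum_(x in f) w x).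

Definition is_min_fvc_red (R : realType) (V : finType) (E : {set {set V}})
  (U : {set V}) (w : V -> R) : Prop :=
  [/\ is_fvc (red (induced_edges E U)) w,
      (forall x, x \notin U -> w x = 0) &
      (forall w' : V -> R, is_fvc (red (induced_edges E U)) w' ->
         \sum_(x in U) w x <= \sum_(x in U) w' x)].

(* Relations and degrees.  A tuple of a relation with schema e is a        *)
(* function V -> option D which is Some exactly on e.                       *)

Definition proj (V : finType) (D : finType) (Y : {set V})
  (t : {ffun V -> option D}) : {ffun V -> option D} :=
  [ffun x => if x \in Y then t x else None].

Definition well_typed (V D : finType) (e : {set V})
  (rel : {set {ffun V -> option D}}) : Prop :=
  forall t, t \in rel -> forall x, (t x != None) = (x \in e).

Definition deg (V D : finType) (rel : {set {ffun V -> option D}})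
  (Y X : {set V}) : nat :=
  \max_(s : {ffun V -> option D})
     #|[set proj Y t | t in [set t in rel | proj X t == s]]|.

(* R satisfies the constraint set sigma_R: deg_R(Y|X) <= 2 sigma(X)/sigma(Y),
   written multiplicatively. *)
Definition satisfies (R : realType) (V D : finType) (e : {set V})
  (rel : {set {ffun V -> option D}}) (sig : {set V} -> R) : Prop :=
  forall X Y : {set V}, X \subset Y -> Y \subset e ->
    (deg rel Y X)%:R * sig Y <= 2 * sig X.

(* sigma e U is sigma_R(U) for the relation R with schema e.                *)

Definition thr (R : realType) (V : finType) (n p : nat) (v : V -> R)
  (U : {set V}) : R :=
  n%:R / powR p%:R (\sum_(i in U) v i).

Definition heavy (R : realType) (V : finType) (n p : nat)
  (sigma : {set V} -> {set V} -> R) (e U : {set V}) (v : V -> R) : bool :=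
  thr n p v U <= sigma e U.

Definition consistent_set (R : realType) (V : finType) (n p : nat)
  (sigma : {set V} -> {set V} -> R) (e U : {set V}) (v : V -> R) : bool :=
  sigma e U <= thr n p v U.

Definition consistent_with (R : realType) (V : finType) (E : {set {set V}})
  (n p : nat) (sigma : {set V} -> {set V} -> R) (v : V -> R) : Prop :=
  forall e, e \in E -> forall U : {set V}, U \subset e ->
    consistent_set n p sigma e U v.

Definition Hv (R : realType) (V : finType) (E : {set {set V}}) (n p : nat)
  (sigma : {set V} -> {set V} -> R) (v : V -> R) : {set V} :=
  \bigcup_(e in E) \bigcup_(U : {set V} | (U \subset e) && heavy n p sigma e U v) U.

Definition Vpsi (R : realType) (V : finType) (vstar : {set V} -> V -> R)
  (psi : {set V} -> R) : V -> R :=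
  fun x => \sum_(U : {set V}) psi U * vstar U x.

Definition norm1 (R : realType) (V : finType) (psi : {set V} -> R) : R :=
  \sum_(U : {set V}) psi U.

Definition scale_div (R : realType) (V : finType) (v : V -> R) (Delta : R)
  : V -> R := fun x => v x / Delta.

Definition loop_cond (R : realType) (V : finType) (E : {set {set V}})
  (n p : nat) (sigma : {set V} -> {set V} -> R) (Delta : R)
  (vstar : {set V} -> V -> R) (psi : {set V} -> R) : Prop :=
  norm1 psi < 1 /\ Hv E n p sigma (scale_div (Vpsi vstar psi) Delta) != setT.

Definition construct_step (R : realType) (V : finType) (E : {set {set V}})
  (n p : nat) (sigma : {set V} -> {set V} -> R) (Delta : R)
  (vstar : {set V} -> V -> R) (psi psi' : {set V} -> R) : Prop :=
  let L := ~: Hv E n p sigma (scale_div (Vpsi vstar psi) Delta) in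
  let ok (d : R) :=
    [/\ 0 < d, d <= 1 - norm1 psi &
        consistent_with E n p sigma
          (scale_div (fun x => Vpsi vstar psi x + d * vstar L x) Delta)] in
  exists d : R, ok d /\ (forall d', ok d' -> d' <= d) /\
    psi' = (fun U => if U == L then d else psi U).

Inductive construct_reach (R : realType) (V : finType) (E : {set {set V}})
  (n p : nat) (sigma : {set V} -> {set V} -> R) (Delta : R)
  (vstar : {set V} -> V -> R) : ({set V} -> R) -> Prop :=
| CR0 : construct_reach E n p sigma Delta vstar (fun _ => 0)
| CRS psi psi' :
    construct_reach E n p sigma Delta vstar psi ->
    loop_cond E n p sigma Delta vstar psi ->
    construct_step E n p sigma Delta vstar psi psi' ->
    construct_reach E n p sigma Delta vstar psi'.

Definition construct_returns (R : realType) (V : finType) (E : {set {set V}})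
  (n p : nat) (sigma : {set V} -> {set V} -> R) (Delta : R)
  (vstar : {set V} -> V -> R) (psi : {set V} -> R) : Prop :=
  construct_reach E n p sigma Delta vstar psi /\
  ~ loop_cond E n p sigma Delta vstar psi.

(** The support of the returned [psi] is a chain of sets, each containing the
    light set [L = V \ H[V(psi)/Delta]]: every iteration only shrinks [L] and
    fills a fresh coordinate [psi_L], since reusing a coordinate would
    contradict the maximality of the [delta] chosen for it.  When the loop
    stops with [L] nonempty we must have [|psi|_1 >= 1].  Along the chain one
    can pick a single edge [e'] containing [vars(R) \ H] whose trace on every
    support set [U] is a maximal edge of [H[U]], i.e. an edge of
    [red(H[U])]; then each cover [v*_U] puts weight at least one on [e'], and
    summing with the weights [psi_U] gives [sum_(x in e') V_x(psi) >= 1]. *)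
From HB Require Import structures.
From mathcomp Require Import all_boot all_order all_algebra.
From mathcomp Require Import reals exp.
Set Implicit Arguments. Unset Strict Implicit. Unset Printing Implicit Defensive.
Import Order.TTheory GRing.Theory Num.Theory.
Local Open Scope ring_scope.

Definition subset_chain (V : finType) (C : {set {set V}}) :=
  {in C &, forall U W : {set V}, (U \subset W) || (W \subset U)}.

Lemma subset_chain_max (V : finType) (C : {set {set V}}) :
  subset_chain C -> C != set0 ->
  exists2 M, M \in C & {in C, forall U : {set V}, U \subset M}.
Proof.
move=> chC /set0Pn [M0 M0C].
have [M MC Mmax] := arg_maxnP (fun U : {set V} => #|U|) M0C.
exists M => // U UC; have /orP [] // := chC U M UC MC.
by move=> MU; have /eqP <- : M == U by rewrite eqEcard MU; apply: Mmax.
Qed.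

Lemma exists_edge_maximal_on_chain (V : finType) (E C : {set {set V}})
    (S g0 : {set V}) :
  g0 \in E -> S \subset g0 -> subset_chain C -> {in C, forall U : {set V}, S \subset U} ->
  exists2 g, g \in E & S \subset g /\
    {in C, forall U : {set V}, {in E, forall k : {set V}, ~~ (U :&: g \proper U :&: k)}}.
Proof.
move=> g0E Sg0; have [m] := ubnP #|C|; elim: m C => // m IH C ltCm chC SC.
have [->|C0] := eqVneq C set0; first by exists g0 => //; split => // U; rewrite inE.
have [M MC Mmax] := subset_chain_max chC C0.
have [|||g1 g1E [Sg1 g1max]] := IH (C :\ M).
- by rewrite (cardsD1 M) MC in ltCm.
- by apply: sub_in2 chC => U /setD1P [].
- by move=> U /setD1P [_]; apply: SC.
(* among the edges that keep the traces of [g1] on [C :\ M], maximise the trace on [M] *)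
pose P h := [&& h \in E, S \subset h & [forall U in C :\ M, U :&: g1 \subset U :&: h]].
have Pg1 : P g1 by rewrite /P g1E Sg1; apply/forall_inP.
have [h /and3P [hE Sh /forall_inP g1h] hmax] := arg_maxnP (fun h => #|M :&: h|) Pg1.
exists h => //; split => // U UC k kE; apply/negP => Uhk.
have [UM | UM] := eqVneq U M; last first.
  have UC' : U \in C :\ M by rewrite !inE UM.
  by move/negP: (g1max U UC' k kE); apply; apply: sub_proper_trans (g1h U UC') Uhk.
subst U; have Mhk := proper_sub Uhk.
have Pk : P k.
  have Sk : S \subset k.
    by apply: subset_trans (subsetIr M k); apply: subset_trans Mhk; rewrite subsetI SC.
  rewrite /P kE Sk /=.
  apply/forall_inP => W WC'; apply: subset_trans (g1h W WC') _.
  have WM : W \subset M by apply: Mmax; case/setD1P: WC'.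
  by rewrite -(setIidPl WM) -!setIA setIS.
by move: (hmax k Pk) => /=; rewrite leqNgt (proper_card Uhk).
Qed.

Lemma red_induced_maximal (V : finType) (E : {set {set V}}) (U h : {set V}) :
  h \in E -> U :&: h != set0 -> {in E, forall k : {set V}, ~~ (U :&: h \proper U :&: k)} ->
  U :&: h \in red (induced_edges E U).
Proof.
move=> hE Uh0 hmax; rewrite inE; apply/andP; split.
  by apply/imsetP; exists h; rewrite // inE hE.
apply/existsPn => f; apply/negP => /andP [/imsetP [k]].
by rewrite inE => /andP [kE _] ->; apply/negP/hmax.
Qed.

Lemma sum_trace_min_fvc (R : realType) (V : finType) (E : {set {set V}})
    (U g : {set V}) (w : V -> R) :
  is_min_fvc_red E U w -> U :&: g \in red (induced_edges E U) ->
  1 <= \sum_(x in g) w x.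
Proof.
case=> [[_ cover] w0 _] /cover; congr (_ <= _).
rewrite [RHS](bigID (fun x => x \in U)) /= [X in _ + X]big1 ?addr0.
  by apply: eq_bigl => x; rewrite inE andbC.
by move=> x /andP [_ /negbTE xU]; apply: w0; rewrite xU.
Qed.

Lemma le_thr (R : realType) (V : finType) (n p : nat) (v v' : V -> R) (U : {set V}) :
  (0 < p)%N -> (forall x, v x <= v' x) -> thr n p v' U <= thr n p v U.
Proof.
move=> p_gt0 vv'; rewrite /thr ler_wpM2l // lef_pV2 ?posrE ?powR_gt0 ?ltr0n //.
by rewrite ler_powR ?ler1n // ler_sum.
Qed.

Lemma subset_Hv (R : realType) (V : finType) (E : {set {set V}}) (n p : nat)
    (sigma : {set V} -> {set V} -> R) (v v' : V -> R) :
  (0 < p)%N -> (forall x, v x <= v' x) ->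
  Hv E n p sigma v \subset Hv E n p sigma v'.
Proof.
move=> p_gt0 vv'; apply/subsetP => x /bigcupP [e eE /bigcupP [U /andP [Ue hU] xU]].
apply/bigcupP; exists e => //; apply/bigcupP; exists U => //.
by rewrite Ue; apply: le_trans hU; apply: le_thr.
Qed.

Section Update.
Variables (R : realType) (V : finType) (psi : {set V} -> R) (L : {set V}) (d : R).
Hypothesis psiL0 : psi L = 0.

Let psi' U := if U == L then d else psi U.

Lemma Vpsi_update (vstar : {set V} -> V -> R) x :
  Vpsi vstar psi' x = Vpsi vstar psi x + d * vstar L x.
Proof.
rewrite /Vpsi (bigD1 L) // [in RHS](bigD1 L) //= /psi' eqxx psiL0 mul0r add0r addrC.
by congr (_ + _); apply: eq_bigr => U /negbTE ->.
Qed.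

Lemma norm1_update : norm1 psi' = norm1 psi + d.
Proof.
rewrite /norm1 (bigD1 L) // [in RHS](bigD1 L) //= /psi' eqxx psiL0 add0r addrC.
by congr (_ + _); apply: eq_bigr => U /negbTE ->.
Qed.

End Update.

Lemma norm1_le_sum_Vpsi (R : realType) (V : finType) (vstar : {set V} -> V -> R)
    (psi : {set V} -> R) (A : {set V}) :
  (forall U, 0 <= psi U) -> (forall U, psi U != 0 -> 1 <= \sum_(x in A) vstar U x) ->
  norm1 psi <= \sum_(x in A) Vpsi vstar psi x.
Proof.
move=> psi_ge0 cover; rewrite /Vpsi exchange_big; apply: ler_sum => U _.
rewrite -mulr_sumr; have [-> | /cover] := eqVneq (psi U) 0; first by rewrite mul0r.
exact: ler_peMr.
Qed.

Section Construct.
Variables (R : realType) (V : finType) (E : {set {set V}})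
  (sigma : {set V} -> {set V} -> R) (n p : nat) (Delta : R)
  (vstar : {set V} -> V -> R).
Hypothesis p_gt0 : (0 < p)%N.
Hypothesis Delta_gt0 : 0 < Delta.
Hypothesis vstar_ge0 : forall U x, 0 <= vstar U x.

Definition light (psi : {set V} -> R) :=
  ~: Hv E n p sigma (scale_div (Vpsi vstar psi) Delta).

Definition admissible (psi : {set V} -> R) (d : R) :=
  [/\ 0 < d, d <= 1 - norm1 psi &
      consistent_with E n p sigma
        (scale_div (fun x => Vpsi vstar psi x + d * vstar (light psi) x) Delta)].

Definition psi_support (psi : {set V} -> R) := [set U | psi U != 0].

Definition construct_inv (psi : {set V} -> R) :=
  [/\ forall U, 0 <= psi U,
      subset_chain (psi_support psi),
      {in psi_support psi, forall U : {set V}, light psi \subset U} &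
      forall d, admissible psi d -> psi (light psi) = 0].

Lemma construct_inv_step psi psi_next :
  construct_inv psi -> construct_step E n p sigma Delta vstar psi psi_next ->
  construct_inv psi_next.
Proof.
move=> [psi_ge0 chain light_sub fresh] [d0 [ok0 [d0max ->]]].
have psiL0 := fresh d0 ok0; case: ok0 => d0_gt0 _ _.
rewrite -/(light psi); set L := light psi in psiL0 d0max *.
set psi' := fun U => if U == L then d0 else psi U.
have Vpsi' x : Vpsi vstar psi' x = Vpsi vstar psi x + d0 * vstar L x.
  exact: Vpsi_update.
have norm1' : norm1 psi' = norm1 psi + d0 by apply: norm1_update.
have L'L : light psi' \subset L.
  rewrite setCS subset_Hv // => x; rewrite /scale_div Vpsi'.
  by apply: ler_wpM2r; [rewrite invr_ge0 ltW | rewrite lerDl mulr_ge0 // ltW].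
have supp' U : U \in psi_support psi' -> U = L \/ U \in psi_support psi.
  by rewrite !inE /psi' /=; case: (U =P L) => [-> | _ psiU]; [left | right].
split.
- by move=> U; rewrite /psi' /=; case: (U =P L) => _; [apply: ltW |].
- move=> U W /supp' [-> | UC] /supp' [-> | WC].
  + by rewrite subxx.
  + by rewrite light_sub.
  + by rewrite light_sub ?orbT.
  + exact: chain.
- by move=> U /supp' [-> | /light_sub]; [| apply: subset_trans].
move=> d [d_gt0 d_le dcons].
(* if [L] were still light, [d0 + d] would have been admissible at [psi] *)
have L'_neq : light psi' != L.
  apply/eqP => L'L_eq; suff /d0max : admissible psi (d0 + d) by rewrite gerDl leNgt d_gt0.
  split; first by rewrite addr_gt0.
    by move: d_le; rewrite norm1' opprD addrA lerBrDr (addrC d0).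
  suff -> : (fun x => Vpsi vstar psi x + (d0 + d) * vstar L x) =
            (fun x => Vpsi vstar psi' x + d * vstar (light psi') x) by [].
  by apply: boolp.funext => x; rewrite Vpsi' L'L_eq mulrDl addrA.
rewrite /psi' (negbTE L'_neq); apply/eqP/negPn/negP => supp_L'.
by move: L'_neq; rewrite eqEsubset L'L light_sub ?inE.
Qed.

Lemma construct_inv_reach psi :
  construct_reach E n p sigma Delta vstar psi -> construct_inv psi.
Proof.
elim=> [|psi0 psi1 _ inv0 _ /(construct_inv_step inv0)] //.
by split=> // [U W|U]; rewrite inE eqxx.
Qed.

End Construct.

Theorem lemma4p12 (R : realType) (V D : finType) (E : {set {set V}})
  (rel : {set V} -> {set {ffun V -> option D}})
  (sigma : {set V} -> {set V} -> R) (n p : nat) (Delta : R)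
  (vstar : {set V} -> V -> R) (psi : {set V} -> R) :
  (* V is the union of the schemas *)
  (forall x : V, exists2 e, e \in E & x \in e) ->
  (* relation data and input size *)
  (forall e, e \in E -> well_typed e (rel e)) ->
  n = (\sum_(e in E) #|rel e|)%N ->
  (0 < p)%N ->
  (* Sigma-uniformized *)
  (forall e, e \in E -> forall U : {set V}, U \subset e -> 0 <= sigma e U) ->
  (forall e, e \in E -> satisfies e (rel e) (sigma e)) ->
  0 < Delta ->
  (* fixed minimum fractional vertex covers v*_U of red(H[U]) *)
  (forall U : {set V}, is_min_fvc_red E U (vstar U)) ->
  construct_returns E n p sigma Delta vstar psi ->
  forall e, e \in E ->
    e :\: Hv E n p sigma (scale_div (Vpsi vstar psi) Delta) != set0 ->
    exists2 e', e' \in E &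
      (e :\: Hv E n p sigma (scale_div (Vpsi vstar psi) Delta) \subset e') /\
      1 <= \sum_(x in e') Vpsi vstar psi x.
Proof.
move=> _ _ _ p_gt0 _ _ Delta_gt0 vmin [reach stop] e eE.
set H := Hv _ _ _ _ _ => S_neq0.
have vstar_ge0 U x : 0 <= vstar U x by case: (vmin U) => [[]].
have [psi_ge0 chain light_sub _] := construct_inv_reach p_gt0 Delta_gt0 vstar_ge0 reach.
have norm1_ge1 : 1 <= norm1 psi.
  rewrite leNgt; apply/negP => lt1; apply: stop; split => //.
  by rewrite -/H; apply: contraNneq S_neq0 => ->; rewrite setDT.
have S_sub U : U \in psi_support psi -> e :\: H \subset U.
  by move/light_sub; apply: subset_trans; rewrite setDE subsetIr.
have [g gE [Sg gmax]] := exists_edge_maximal_on_chain eE (subsetDl e H) chain S_sub.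
exists g => //; split => //; apply: le_trans norm1_ge1 _.
apply: norm1_le_sum_Vpsi => // U psiU; have UC : U \in psi_support psi by rewrite inE.
apply: sum_trace_min_fvc (vmin U) (red_induced_maximal gE _ (gmax U UC)).
by apply: subset_neq0 S_neq0; rewrite subsetI Sg S_sub.
Qed.
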